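(* Let $f(1),f(2),\dots$ be a non-negative, non-decreasing sequence of real numbers with $$\sum_{n=1}^{\infty}\frac{f(n)}{n^2}=\infty.$$ Then there exists a sequence $b(1),b(2),\dots$ of rational numbers such that $$b(n+m)\le b(n)+b(m)+f(n+m)\quad\text{for all integers } n,m\ge 1,$$ and such that the map $n\mapsto b(n)/n$ is a bijection from the positive integers onto $\mathbb{Q}$, i.e. every rational number occurs exactly once among the values $b(n)/n$. *)

From Stdlib Require Export Reals QArith Qreals.

Definition partial_sum_f_over_n2 (f : nat -> R) (N : nat) : R :=
  sum_f_R0 (fun k => (f (S k) / (INR (S k))^2)%R) N.

Definition ratio (b : nat -> Q) (n : nat) : Q :=
  (b n / inject_Z (Z.of_nat n))%Q.

(** Put [D n = f (n+2) / (2 (n+1) (n+2))].  As [f] is non-decreasing, the sum of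
    [D] over [a <= n < a+k] is at most [f (a+k+1)/2 * (1/(a+1) - 1/(a+k+1))], while
    the divergence of [sum f(n)/n^2] makes every tail of [sum D] diverge.

    A greedy walk through the rationals whose n-th step is at most [D n] visits
    every rational exactly once: it always aims at the first rational (in a fixed
    enumeration) not yet visited, jumps there as soon as it is within reach, and
    otherwise moves up by almost [D n] to a fresh rational; as the steps have
    divergent sum, each target is eventually within reach.

    With [u] this walk, [b n = n u (n-1)] works: the bound on the sums of [D] gives
    [n u (n-1) + m u (m-1) >= (n+m) u (n+m-1) - f (n+m)/2]. *)

From Stdlib Require Import Reals QArith Qreals Lra Lia List Cantor
  ConstructiveEpsilon IndefiniteDescription Classical.
Open Scope R_scope.

Definition nat_to_Q (n : nat) : Q :=
  let (p, d) := Cantor.of_nat n in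
  let (x, y) := Cantor.of_nat p in
  Qmake (Z.of_nat x - Z.of_nat y) (Pos.of_succ_nat d).

Lemma nat_to_Q_surj (q : Q) : exists n, nat_to_Q n = q.
Proof.
  destruct q as [z d].
  exists (Cantor.to_nat (Cantor.to_nat (Z.to_nat z, Z.to_nat (- z)), pred (Pos.to_nat d))).
  unfold nat_to_Q. rewrite !Cantor.cancel_of_to.
  f_equal.
  - lia.
  - apply SuccNat2Pos.inv. pose proof (Pos2Nat.is_pos d). lia.
Qed.

Lemma Q2R_dense a b : a < b -> exists r : Q, a < Q2R r < b.
Proof.
  intros Hab.
  destruct (archimed (/ (b - a))) as [Hk _].
  set (k := up (/ (b - a))) in Hk.
  assert (Hk0 : (0 < k)%Z).
  { apply lt_IZR. assert (0 < / (b - a)) by (apply Rinv_0_lt_compat; lra). lra. }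
  assert (Hkr : 0 < IZR k) by (apply IZR_lt; lia).
  assert (Hkk : 1 < (b - a) * IZR k).
  { apply Rmult_lt_compat_l with (r := b - a) in Hk; [|lra].
    rewrite Rinv_r in Hk by lra. lra. }
  destruct (archimed (a * IZR k)) as [Hm1 Hm2].
  exists (Qmake (up (a * IZR k)) (Z.to_pos k)).
  unfold Q2R; simpl. rewrite Z2Pos.id by lia.
  split; apply Rmult_lt_reg_r with (IZR k); auto;
    rewrite Rmult_assoc, Rinv_l by lra; lra.
Qed.

Definition fresh (h : list Q) (q : Q) : bool :=
  forallb (fun y => negb (Qeq_bool q y)) h.

Lemma freshP h q : fresh h q = true <-> forall y, In y h -> ~ (q == y)%Q.
Proof.
  unfold fresh. rewrite forallb_forall. split; intros H y Hy.
  - specialize (H y Hy). rewrite Bool.negb_true_iff in H.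
    rewrite <- Qeq_bool_iff. congruence.
  - apply Bool.negb_true_iff, Bool.not_true_iff_false.
    rewrite Qeq_bool_iff. exact (H y Hy).
Qed.

Fixpoint max_below (a b : R) (h : list Q) : R :=
  match h with
  | nil => a
  | y :: t =>
      if Rlt_dec (Q2R y) b then Rmax (Q2R y) (max_below a b t) else max_below a b t
  end.

Lemma max_below_lt a b h : a < b -> max_below a b h < b.
Proof.
  intros Hab; induction h as [|y t IH]; simpl; auto.
  destruct Rlt_dec; auto. apply Rmax_lub_lt; auto.
Qed.

Lemma max_below_ge_bound a b h : a <= max_below a b h.
Proof.
  induction h as [|y t IH]; simpl; [lra|].
  destruct Rlt_dec; auto. eapply Rle_trans; [exact IH | apply Rmax_r].
Qed.

Lemma max_below_ge a b h y : In y h -> Q2R y < b -> Q2R y <= max_below a b h.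
Proof.
  induction h as [|z t IH]; simpl; intros Hy Hb; [contradiction|].
  destruct Hy as [<-|Hy].
  - destruct Rlt_dec; [apply Rmax_l | contradiction].
  - destruct Rlt_dec; auto. eapply Rle_trans; [apply IH; auto | apply Rmax_r].
Qed.

Lemma exists_fresh_between a b h :
  a < b -> exists r, a < Q2R r < b /\ fresh h r = true.
Proof.
  intros Hab.
  destruct (Q2R_dense _ _ (max_below_lt a b h Hab)) as [r [Hr1 Hr2]].
  exists r. pose proof (max_below_ge_bound a b h).
  split; [lra|]. apply freshP. intros y Hy Heq. apply Qeq_eqR in Heq.
  pose proof (max_below_ge a b h y Hy). lra.
Qed.

Lemma pick_fresh_ex a b h :
  exists r, a < b -> a < Q2R r < b /\ fresh h r = true.
Proof.
  destruct (Rlt_dec a b) as [Hab|Hab].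
  - destruct (exists_fresh_between a b h Hab) as [r Hr]. eauto.
  - exists 0%Q. contradiction.
Qed.

Definition pick_fresh (a b : R) (h : list Q) : Q :=
  proj1_sig (constructive_indefinite_description _ (pick_fresh_ex a b h)).

Lemma pick_fresh_spec a b h :
  a < b -> a < Q2R (pick_fresh a b h) < b /\ fresh h (pick_fresh a b h) = true.
Proof. unfold pick_fresh. destruct constructive_indefinite_description; auto. Qed.

Lemma exists_fresh_index h : exists n, fresh h (nat_to_Q n) = true.
Proof.
  destruct (exists_fresh_between 0 1 h Rlt_0_1) as [r [_ Hr]].
  destruct (nat_to_Q_surj r) as [n <-]. eauto.
Qed.

Definition first_fresh (h : list Q) : nat :=
  proj1_sig (epsilon_smallest (fun n => fresh h (nat_to_Q n) = true)
    (fun n => Bool.bool_dec (fresh h (nat_to_Q n)) true) (exists_fresh_index h)).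

Lemma first_fresh_spec h :
  fresh h (nat_to_Q (first_fresh h)) = true /\
  forall k, fresh h (nat_to_Q k) = true -> (first_fresh h <= k)%nat.
Proof. unfold first_fresh. destruct epsilon_smallest; auto. Qed.

Fixpoint psum_from (D : nat -> R) (n0 k : nat) : R :=
  match k with O => 0 | S k' => psum_from D n0 k' + D (n0 + k')%nat end.

Lemma increment_psum_le (D : nat -> R) (u : nat -> Q)
  (u_step : forall n, Q2R (u (S n)) <= Q2R (u n) + D n) a k :
  Q2R (u (a + k)%nat) <= Q2R (u a) + psum_from D a k.
Proof.
  induction k as [|k IH]; simpl.
  - rewrite Nat.add_0_r. lra.
  - rewrite Nat.add_succ_r. pose proof (u_step (a + k)%nat). lra.
Qed.

(** * A greedy walk through the rationals *)

Section Walk.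
Variable D : nat -> R.
Hypothesis D_nonneg : forall n, 0 <= D n.
Hypothesis D_tail_unbounded : forall n0 M, exists k, M < psum_from D n0 k.

Definition walk_step (n : nat) (h : list Q) : Q :=
  let x := hd 0%Q h in
  let t := nat_to_Q (first_fresh h) in
  if Rle_dec (Q2R t) (Q2R x + D n) then t
  else pick_fresh (Q2R x + D n - (/2)^n) (Q2R x + D n) h.

(* [visited n] lists the first [n+1] positions of the walk, the latest first. *)
Fixpoint visited (n : nat) : list Q :=
  match n with O => 0%Q :: nil | S k => walk_step k (visited k) :: visited k end.

Definition walk (n : nat) : Q := hd 0%Q (visited n).

Lemma half_pow_pos n : 0 < (/2)^n.
Proof. apply pow_lt. lra. Qed.

Lemma walk_S n : walk (S n) = walk_step n (visited n).
Proof. reflexivity. Qed.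

Lemma walk_step_le n : Q2R (walk (S n)) <= Q2R (walk n) + D n.
Proof.
  rewrite walk_S. unfold walk_step. fold (walk n).
  destruct Rle_dec as [Hle|_]; auto.
  pose proof (half_pow_pos n).
  apply Rlt_le, pick_fresh_spec. lra.
Qed.

Lemma walk_fresh n : fresh (visited n) (walk (S n)) = true.
Proof.
  rewrite walk_S. unfold walk_step. destruct Rle_dec.
  - apply first_fresh_spec.
  - pose proof (half_pow_pos n). apply pick_fresh_spec. lra.
Qed.

Lemma In_visited n m : (m <= n)%nat -> In (walk m) (visited n).
Proof.
  induction n as [|n IH]; intros Hm.
  - replace m with 0%nat by lia. now left.
  - destruct (Nat.eq_dec m (S n)) as [->|]; [now left|].
    right. apply IH. lia.
Qed.

Lemma visitedP n y : In y (visited n) -> exists m, (m <= n)%nat /\ y = walk m.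
Proof.
  induction n as [|n IH]; simpl; intros Hy.
  - destruct Hy as [<-|[]]. now exists 0%nat.
  - destruct Hy as [<-|Hy]; [now exists (S n)|].
    destruct (IH Hy) as [m [? ?]]. exists m. split; [lia | auto].
Qed.

Lemma walk_inj n m : (walk n == walk m)%Q -> n = m.
Proof.
  assert (K : forall n m, (n < m)%nat -> ~ (walk m == walk n)%Q).
  { intros a [|c] Hac; [lia|].
    apply (proj1 (freshP _ _) (walk_fresh c)), In_visited. lia. }
  intros Heq. destruct (Nat.lt_total n m) as [Hl|[He|Hl]]; auto;
    exfalso; eapply K; eauto. symmetry. exact Heq.
Qed.

Section Target.
Variables (i N0 : nat).
Hypothesis earlier_visited :
  forall j, (j < i)%nat -> exists n, (n <= N0)%nat /\ (walk n == nat_to_Q j)%Q.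
Hypothesis never_visited : forall n, ~ (walk n == nat_to_Q i)%Q.

Lemma first_fresh_visited N : (N0 <= N)%nat -> first_fresh (visited N) = i.
Proof.
  intros HN. destruct (first_fresh_spec (visited N)) as [Hfresh Hmin].
  assert (Hi : fresh (visited N) (nat_to_Q i) = true).
  { apply freshP. intros y Hy Heq. destruct (visitedP N y Hy) as [m [_ ->]].
    apply (never_visited m). now symmetry. }
  specialize (Hmin i Hi).
  destruct (Nat.eq_dec (first_fresh (visited N)) i) as [|Hne]; auto.
  destruct (earlier_visited (first_fresh (visited N))) as [n [Hn Heq]]; [lia|].
  exfalso. apply (proj1 (freshP _ _) Hfresh (walk n)); [apply In_visited; lia|].
  now symmetry.
Qed.

Lemma walk_chases_target N : (N0 <= N)%nat ->
  Q2R (walk N) + D N < Q2R (nat_to_Q i) /\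
  Q2R (walk N) + D N - (/2)^N < Q2R (walk (S N)).
Proof.
  intros HN. pose proof (walk_S N) as E. unfold walk_step in E.
  rewrite (first_fresh_visited N HN) in E. fold (walk N) in E.
  destruct Rle_dec as [Hle|Hlt].
  - exfalso. apply (never_visited (S N)). rewrite E. reflexivity.
  - pose proof (half_pow_pos N).
    destruct (pick_fresh_spec (Q2R (walk N) + D N - (/2)^N) (Q2R (walk N) + D N)
      (visited N)) as [[H1 _] _]; [lra|].
    rewrite <- E in H1. split; lra.
Qed.

(* The losses [(/2)^N] add up to less than [2 (/2)^N0]. *)
Lemma walk_chasing_growth k :
  Q2R (walk N0) + psum_from D N0 k - 2 * (/2)^N0 + 2 * (/2)^(N0 + k)
    <= Q2R (walk (N0 + k)).
Proof.
  induction k as [|k IH]; simpl.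
  - rewrite Nat.add_0_r. lra.
  - pose proof (proj2 (walk_chases_target (N0 + k) ltac:(lia))).
    rewrite Nat.add_succ_r.
    replace ((/2) ^ S (N0 + k)) with ((/2)^(N0 + k) * /2) by (simpl; ring). lra.
Qed.

Lemma target_unavoidable : False.
Proof.
  destruct (D_tail_unbounded N0 (Q2R (nat_to_Q i) - Q2R (walk N0) + 2)) as [k Hk].
  pose proof (walk_chasing_growth k).
  pose proof (proj1 (walk_chases_target (N0 + k) ltac:(lia))).
  pose proof (half_pow_pos (N0 + k)). pose proof (D_nonneg (N0 + k)).
  assert (Hle1 : forall n, (/2)^n <= 1) by (induction n; simpl; lra).
  specialize (Hle1 N0).
  lra.
Qed.

End Target.

Lemma walk_visits_initial_segment i :
  exists N0, forall j, (j < i)%nat -> exists n, (n <= N0)%nat /\ (walk n == nat_to_Q j)%Q.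
Proof.
  induction i as [|i [N0 HN0]].
  - exists 0%nat. intros; lia.
  - assert (Hi : exists n, (walk n == nat_to_Q i)%Q).
    { apply NNPP. intros Hno. apply (target_unavoidable i N0 HN0).
      intros n Hn. apply Hno. eauto. }
    destruct Hi as [n Hn]. exists (Nat.max N0 n). intros j Hj.
    destruct (Nat.eq_dec j i) as [->|].
    + exists n. split; [lia | auto].
    + destruct (HN0 j ltac:(lia)) as [m [? ?]]. exists m. split; [lia | auto].
Qed.

Lemma walk_surj q : exists n, (walk n == q)%Q.
Proof.
  destruct (nat_to_Q_surj q) as [i <-].
  destruct (walk_visits_initial_segment (S i)) as [N0 HN0].
  destruct (HN0 i ltac:(lia)) as [n [_ Hn]]. eauto.
Qed.

End Walk.

Theorem exists_Q_enumeration_bounded_steps (D : nat -> R)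
  (D_nonneg : forall n, 0 <= D n)
  (D_tail_unbounded : forall n0 M, exists k, M < psum_from D n0 k) :
  exists u : nat -> Q,
    (forall n, Q2R (u (S n)) <= Q2R (u n) + D n) /\
    (forall q, exists n, (u n == q)%Q) /\
    (forall n m, (u n == u m)%Q -> n = m).
Proof.
  exists (walk D). split; [|split].
  - apply walk_step_le.
  - apply walk_surj; assumption.
  - apply walk_inj.
Qed.

(** * The step bound coming from [f] *)

Section StepBound.
Variable f : nat -> R.
Hypothesis f_nonneg : forall n : nat, (1 <= n)%nat -> 0 <= f n.

(* Equals [f (n+2)/2 * (1/(n+1) - 1/(n+2))]. *)
Definition step_bound (n : nat) : R := f (n + 2) / (2 * INR (n + 2) * INR (n + 1)).

Lemma INR_S_pos n : 0 < INR (S n).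
Proof. apply lt_0_INR. lia. Qed.

Lemma step_bound_nonneg n : 0 <= step_bound n.
Proof.
  unfold step_bound. replace (n + 2)%nat with (S (S n)) by lia.
  replace (n + 1)%nat with (S n) by lia.
  pose proof (f_nonneg (S (S n)) ltac:(lia)).
  pose proof (INR_S_pos n). pose proof (INR_S_pos (S n)).
  apply Rmult_le_pos; auto. left. apply Rinv_0_lt_compat. nra.
Qed.

Lemma psum_step_bound_ge n0 k :
  (partial_sum_f_over_n2 f (n0 + k) - partial_sum_f_over_n2 f n0) / 2
    <= psum_from step_bound n0 k.
Proof.
  induction k as [|k IH]; cbn [psum_from].
  - rewrite Nat.add_0_r. lra.
  - rewrite Nat.add_succ_r. unfold partial_sum_f_over_n2 in *.
    change (sum_f_R0 ?g (S ?m)) with (sum_f_R0 g m + g (S m)).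
    set (P := psum_from step_bound n0 k) in *. unfold step_bound. replace (n0 + k + 2)%nat with (S (S (n0 + k))) by lia.
    replace (n0 + k + 1)%nat with (S (n0 + k)) by lia.
    set (F := f (S (S (n0 + k)))).
    assert (HF : 0 <= F) by (apply f_nonneg; lia).
    set (x := INR (S (n0 + k))). assert (Hx : 0 < x) by apply INR_S_pos.
    replace (INR (S (S (n0 + k)))) with (x + 1) by (unfold x; now rewrite (S_INR (S (n0 + k)))).
    assert (F / (x + 1)^2 / 2 <= F / (2 * (x + 1) * x)).
    { unfold Rdiv. rewrite Rmult_assoc, <- Rinv_mult.
      apply Rmult_le_compat_l; auto. apply Rinv_le_contravar; nra. }
    lra.
Qed.

Lemma step_bound_tail_unbounded :
  cv_infty (partial_sum_f_over_n2 f) ->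
  forall n0 M, exists k, M < psum_from step_bound n0 k.
Proof.
  intros f_div n0 M.
  destruct (f_div (2 * M + partial_sum_f_over_n2 f n0)) as [N HN].
  exists N. specialize (HN (n0 + N)%nat ltac:(lia)).
  pose proof (psum_step_bound_ge n0 N). lra.
Qed.

Hypothesis f_nondecr : forall n : nat, (1 <= n)%nat -> f n <= f (S n).

(* Monotonicity of [f] lets the telescoping sum carry the last value of [f]. *)
Lemma psum_step_bound_le a k :
  psum_from step_bound a k <= f (a + k + 1)%nat / 2 * (/ INR (a + 1) - / INR (a + k + 1)).
Proof.
  induction k as [|k IH]; cbn [psum_from].
  - rewrite Nat.add_0_r, Rminus_diag, Rmult_0_r. lra.
  - set (P := psum_from step_bound a k) in *. unfold step_bound.
    replace (a + k + 2)%nat with (S (S (a + k))) by lia.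
    replace (a + S k + 1)%nat with (S (S (a + k))) by lia.
    replace (a + k + 1)%nat with (S (a + k)) in * by lia.
    pose proof (f_nondecr (S (a + k)) ltac:(lia)) as Hmono.
    set (F1 := f (S (a + k))) in *. set (F2 := f (S (S (a + k)))) in *.
    set (A := INR (a + 1)) in *. set (B := INR (S (a + k))) in *.
    assert (HA : 0 < A) by (unfold A; rewrite Nat.add_1_r; apply INR_S_pos).
    assert (HAB : A <= B) by (apply le_INR; lia).
    replace (INR (S (S (a + k)))) with (B + 1) by (unfold B; now rewrite (S_INR (S (a + k)))).
    assert (HX : 0 <= / A - / B).
    { assert (/ B <= / A) by (apply Rinv_le_contravar; lra). lra. }
    assert (F1 / 2 * (/ A - / B) <= F2 / 2 * (/ A - / B))
      by (apply Rmult_le_compat_r; lra).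
    assert (E : F2 / (2 * (B + 1) * B) = F2 / 2 * (/ B - / (B + 1))) by (field; lra).
    rewrite E.
    replace (F2 / 2 * (/ A - / (B + 1)))
      with (F2 / 2 * (/ A - / B) + F2 / 2 * (/ B - / (B + 1))) by ring.
    lra.
Qed.

(** * From the walk to [b] *)

Variable u : nat -> Q.
Hypothesis u_step : forall n, Q2R (u (S n)) <= Q2R (u n) + step_bound n.

Definition scaled_walk (n : nat) : Q := (inject_Z (Z.of_nat n) * u (n - 1))%Q.

Lemma Q2R_scaled_walk n : Q2R (scaled_walk n) = INR n * Q2R (u (n - 1)).
Proof.
  unfold scaled_walk. rewrite Q2R_mult. f_equal.
  unfold Q2R, inject_Z; simpl. rewrite INR_IZR_INZ. field.
Qed.

Lemma ratio_scaled_walk n : (1 <= n)%nat -> (ratio scaled_walk n == u (n - 1))%Q.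
Proof.
  intros Hn. unfold ratio, scaled_walk. field.
  unfold Qeq; simpl. lia.
Qed.

Lemma scaled_walk_subadditive n m : (1 <= n)%nat -> (1 <= m)%nat ->
  Q2R (scaled_walk (n + m)) <= Q2R (scaled_walk n) + Q2R (scaled_walk m) + f (n + m)%nat.
Proof.
  intros Hn Hm. destruct n as [|a]; [lia|]. destruct m as [|c]; [lia|].
  rewrite !Q2R_scaled_walk.
  replace (S a + S c - 1)%nat with (a + S c)%nat by lia.
  replace (S a - 1)%nat with a by lia. replace (S c - 1)%nat with c by lia.
  pose proof (increment_psum_le _ u u_step a (S c)) as Ha.
  pose proof (increment_psum_le _ u u_step c (S a)) as Hc.
  pose proof (psum_step_bound_le a (S c)) as Ba.
  pose proof (psum_step_bound_le c (S a)) as Bc.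
  replace (c + S a)%nat with (a + S c)%nat in Hc by lia.
  replace (c + S a + 1)%nat with (S a + S c)%nat in Bc by lia.
  replace (a + S c + 1)%nat with (S a + S c)%nat in Ba by lia.
  rewrite Nat.add_1_r in Ba, Bc.
  pose proof (f_nonneg (S a + S c) ltac:(lia)).
  rewrite plus_INR in *.
  set (F := f (S a + S c)) in *. set (P := INR (S a)) in *. set (M := INR (S c)) in *.
  assert (HP : 0 < P) by apply INR_S_pos. assert (HM : 0 < M) by apply INR_S_pos.
  assert (Ea : P * (F / 2 * (/ P - / (P + M))) = F / 2 * (M / (P + M))) by (field; lra).
  assert (Ec : M * (F / 2 * (/ M - / (P + M))) = F / 2 * (P / (P + M))) by (field; lra).
  assert (Esum : F / 2 * (M / (P + M)) + F / 2 * (P / (P + M)) = F / 2) by (field; lra).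
  nra.
Qed.

End StepBound.

Theorem theorem5p6 (f : nat -> R)
  (f_nonneg : forall n : nat, (1 <= n)%nat -> (0 <= f n)%R)
  (f_nondecr : forall n : nat, (1 <= n)%nat -> (f n <= f (S n))%R)
  (f_div : cv_infty (partial_sum_f_over_n2 f)) :
  exists b : nat -> Q,
    (forall n m : nat, (1 <= n)%nat -> (1 <= m)%nat ->
       (Q2R (b (n + m)%nat) <= Q2R (b n) + Q2R (b m) + f (n + m)%nat)%R) /\
    (forall q : Q, exists n : nat, (1 <= n)%nat /\ (ratio b n == q)%Q) /\
    (forall n m : nat, (1 <= n)%nat -> (1 <= m)%nat ->
       (ratio b n == ratio b m)%Q -> n = m).
Proof.
  destruct (exists_Q_enumeration_bounded_steps (step_bound f)
    (step_bound_nonneg f f_nonneg) (step_bound_tail_unbounded f f_nonneg f_div))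
    as [u [u_step [u_surj u_inj]]].
  exists (scaled_walk u). split; [|split].
  - exact (scaled_walk_subadditive f f_nonneg f_nondecr u u_step).
  - intros q. destruct (u_surj q) as [k Hk]. exists (S k). split; [lia|].
    rewrite ratio_scaled_walk by lia. now rewrite Nat.sub_succ, Nat.sub_0_r.
  - intros n m Hn Hm Heq. rewrite !ratio_scaled_walk in Heq by lia.
    apply u_inj in Heq. lia.
Qed.
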